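(* Let $n\geq 2$ and $m=\lfloor n/2\rfloor$. For every future-directed null vector $\zeta\in\mathbb{R}^{n,1}$ there exists $a\in\mathbb{C}^{2^m}$ with $\zeta=\zeta_a$, where $$\zeta_a=\sum_{j=1}^n\langle\sqrt{-1}\,c(e_j)a,a\rangle e_j+|a|^2e_0 .$$
   Context: $\mathbb{R}^{n,1}$ is Minkowski space with orthonormal basis $e_0=\partial/\partial t$, $e_j=\partial/\partial x_j$ ($1\le j\le n$) and metric $\sum dx_j^2-dt^2$; a future-directed null vector is a nonzero $\zeta$ with $\zeta\cdot\zeta=0$ and positive $e_0$-component. $\langle\cdot,\cdot\rangle$ is the standard Hermitian inner product on $\mathbb{C}^{2^m}$. The $c(e_j)$ are Baum's Clifford matrices: with $g_1=\begin{pmatrix}\sqrt{-1}&0\\0&-\sqrt{-1}\end{pmatrix}$, $g_2=\begin{pmatrix}0&\sqrt{-1}\\\sqrt{-1}&0\end{pmatrix}$, $T=\begin{pmatrix}0&-\sqrt{-1}\\\sqrt{-1}&0\end{pmatrix}$, $E=I_2$, set $c(e_{2j-1})=E\otimes\cdots\otimes E\otimes g_1\otimes T\otimes\cdots\otimes T$, $c(e_{2j})=E\otimes\cdots\otimes E\otimes g_2\otimes T\otimes\cdots\otimes T$ for $1\le j\le m$ ($j-1$ factors $E$, $m$ factors in total), and, if $n=2m+1$, $c(e_n)=\sqrt{-1}\,T\otimes\cdots\otimes T$ ($m$ factors). (For $n=3$ these are $g_1,g_2,\sqrt{-1}T$; for $n=2$ they are $g_1,g_2$.) *)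

From mathcomp Require Import all_boot all_algebra.
From mathcomp Require Import reals.
From mathcomp Require Import complex mxtens.

Set Implicit Arguments.
Unset Strict Implicit.
Unset Printing Implicit Defensive.

Import GRing.Theory Num.Theory.
Local Open Scope ring_scope.
Local Open Scope complex_scope.

Section Baum.
Variable R : realType.
Local Notation C := R[i].

Definition ii : C := 'i.

Definition g1 : 'M[C]_2 := \matrix_(i < 2, j < 2)
  (if i == j then (if i == 0 :> 'I_2 then ii else - ii) else 0).
Definition g2 : 'M[C]_2 := \matrix_(i < 2, j < 2)
  (if i == j then 0 else ii).
Definition Tm : 'M[C]_2 := \matrix_(i < 2, j < 2)
  (if i == j then 0 else if i == 0 :> 'I_2 then - ii else ii).
Definition Em : 'M[C]_2 := 1%:M.

(* f 0 (x) f 1 (x) ... (x) f (l-1)  (Kronecker product, first factor outermost) *)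
Fixpoint tenspow (l : nat) (f : nat -> 'M[C]_2) : 'M[C]_(2 ^ l) :=
  match l with
  | 0 => 1%:M
  | l'.+1 => castmx (esym (expnS 2 l'), esym (expnS 2 l'))
                    (f 0%N *t tenspow l' (fun k => f k.+1))
  end.

(* c(e_k) for 1 <= k <= n, as a 2^m x 2^m complex matrix, m = n./2.
   For k = 2j-1 (resp. 2j) with 1 <= j <= m: (j-1) factors E, then g1 (resp. g2),
   then T's, m factors in total.  For n = 2m+1 and k = n: sqrt(-1) T (x)...(x) T. *)
Definition cliff (n k : nat) : 'M[C]_(2 ^ n./2) :=
  if (1 <= k <= 2 * n./2)%N then
    let j := (k.-1)./2 in (* 0-based position of the special factor *)
    tenspow n./2 (fun l => if (l < j)%N then Em
                           else if l == j then (if odd k then g1 else g2)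
                           else Tm)
  else ii *: tenspow n./2 (fun _ => Tm).

(* standard Hermitian inner product on C^N, linear in the first slot *)
Definition hdot (N : nat) (u v : 'cV[C]_N) : C :=
  \sum_(k < N) u k 0 * (v k 0)^*.

Definition sqnorm (N : nat) (a : 'cV[C]_N) : C := \sum_(k < N) `|a k 0| ^+ 2.

(* Minkowski space R^{n,1}: zeta : 'cV[R]_(n.+1), component 0 is the e_0 = d/dt
   component, component j (1 <= j <= n) is the e_j = d/dx_j component. *)
Definition mink_dot (n : nat) (u v : 'cV[R]_(n.+1)) : R :=
  \sum_(j < n.+1 | j != ord0) u j 0 * v j 0 - u ord0 0 * v ord0 0.

Definition future_null (n : nat) (z : 'cV[R]_(n.+1)) : Prop :=
  z != 0 /\ mink_dot z z = 0 /\ 0 < z ord0 0.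

Definition zeta_of (n : nat) (a : 'cV[C]_(2 ^ n./2)) : 'cV[C]_(n.+1) :=
  \col_(j < n.+1)
    (if j == ord0 then sqnorm a else hdot (ii *: (cliff n j *m a)) a).

End Baum.

From mathcomp Require Import all_boot all_order all_algebra.
From mathcomp Require Import reals.
From mathcomp Require Import complex mxtens.
From mathcomp Require Import ring lra.
Import Order.TTheory GRing.Theory Num.Theory.
Local Open Scope ring_scope.
Local Open Scope complex_scope.
Set Implicit Arguments.
Unset Strict Implicit.
Unset Printing Implicit Defensive.

(* Write a spinor of C^(2^(p+1)) = C^2 (x) C^(2^p) as a pair (v, w) of
   spinors of C^(2^p) and put S := T (x) ... (x) T.  Since c(e_1) = g1 (x) S,
   c(e_2) = g2 (x) S and c(e_(k+2)) = E (x) c'(e_k), the coordinates of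
   zeta_(v,w) are |v|^2 + |w|^2, <S w, w> - <S v, v>, -2 Re <S w, v>, the sums
   zeta'_v + zeta'_w in the middle, and (in odd dimension) -2 Im <S w, v>.
   For w = g v with g in C these become (1 + |g|^2) zeta'_v in the time and
   middle slots and
   q (|g|^2 - 1, -2 Re g, -2 Im g) in the three outer spatial slots, where
   -q is the last coordinate of zeta'_v in odd dimension 2p+1.  The inverse
   stereographic projection finds g and q for any outer triple, so a null
   vector of R^(2p+3,1) reduces to one of R^(2p+1,1).  Even dimensions are the
   odd ones with a zero last coordinate, and R^(3,1) is solved by hand. *)

Section HermitianProduct.
Variable R : realType.
Local Notation C := R[i].

Lemma sqnormE N (a : 'cV[C]_N) : sqnorm a = hdot a a.
Proof. by apply: eq_bigr => k _; rewrite normCK. Qed.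

Lemma hdotDl N (u u' v : 'cV[C]_N) : hdot (u + u') v = hdot u v + hdot u' v.
Proof. by rewrite /hdot -big_split; apply: eq_bigr => k _; rewrite mxE mulrDl. Qed.

Lemma hdotDr N (u v v' : 'cV[C]_N) : hdot u (v + v') = hdot u v + hdot u v'.
Proof.
by rewrite /hdot -big_split; apply: eq_bigr => k _; rewrite mxE rmorphD mulrDr.
Qed.

Lemma hdotZl N c (u v : 'cV[C]_N) : hdot (c *: u) v = c * hdot u v.
Proof. by rewrite /hdot mulr_sumr; apply: eq_bigr => k _; rewrite mxE mulrA. Qed.

Lemma hdotZr N c (u v : 'cV[C]_N) : hdot u (c *: v) = c^* * hdot u v.
Proof.
by rewrite /hdot mulr_sumr; apply: eq_bigr => k _; rewrite mxE rmorphM mulrCA.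
Qed.

Lemma hdot_castmx N N' (e : N = N') (u v : 'cV[C]_N) :
  hdot (castmx (e, erefl 1%N) u) (castmx (e, erefl 1%N) v) = hdot u v.
Proof. by case: N' / e; rewrite castmx_id. Qed.

Lemma hdot_tensmx M N (u u' : 'cV[C]_M) (x y : 'cV[C]_N) :
  hdot (u *t x) (u' *t y) = hdot u u' * hdot x y.
Proof.
rewrite /hdot mulr_sum; apply: eq_bigr => k _; rewrite !mxE rmorphM.
have -> : mxtens_unindex (0 : 'I_(1 * 1)) = (0, 0).
  by apply/eqP; rewrite xpair_eqE !ord1 !eqxx.
by rewrite mulrACA.
Qed.

Lemma hdot_delta (i j : 'I_2) :
  hdot (delta_mx i 0 : 'cV[C]_2) (delta_mx j 0) = (i == j)%:R.
Proof.
rewrite /hdot !big_ord_recl big_ord0 !mxE /= addr0.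
by case: i j => [[|[|//]] ?] [[|[|//]] ?];
  rewrite /= ?(conjC0, conjC1, mulr0, mul0r, mulr1, addr0, add0r).
Qed.

End HermitianProduct.

Section TensorProduct.
Variables (R : comPzRingType) (m n p q : nat).

Lemma tensmxDl (A A' : 'M[R]_(m, n)) (B : 'M[R]_(p, q)) :
  (A + A') *t B = A *t B + A' *t B.
Proof. by apply/matrixP => i j; rewrite !mxE mulrDl. Qed.

Lemma tensmxDr (A : 'M[R]_(m, n)) (B B' : 'M[R]_(p, q)) :
  A *t (B + B') = A *t B + A *t B'.
Proof. by apply/matrixP => i j; rewrite !mxE mulrDr. Qed.

Lemma tensmxZl c (A : 'M[R]_(m, n)) (B : 'M[R]_(p, q)) :
  (c *: A) *t B = c *: (A *t B).
Proof. by apply/matrixP => i j; rewrite !mxE mulrA. Qed.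

Lemma tensmxZr c (A : 'M[R]_(m, n)) (B : 'M[R]_(p, q)) :
  A *t (c *: B) = c *: (A *t B).
Proof. by apply/matrixP => i j; rewrite !mxE mulrCA. Qed.

End TensorProduct.

Lemma castmx_mulmx (R : pzRingType) N N' (e : N = N') (M : 'M[R]_N) (u : 'cV[R]_N) :
  castmx (e, e) M *m castmx (e, erefl 1%N) u = castmx (e, erefl 1%N) (M *m u).
Proof. by case: N' / e; rewrite !castmx_id. Qed.

Lemma scale_castmx (R : pzRingType) N N' (e : N = N') c (M : 'M[R]_N) :
  c *: castmx (e, e) M = castmx (e, e) (c *: M).
Proof. by case: N' / e; rewrite !castmx_id. Qed.

Section SpinorBlocks.
Variable R : realType.
Local Notation C := R[i].
Local Notation e0 := (delta_mx 0 0 : 'cV[C]_2).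
Local Notation e1 := (delta_mx 1 0 : 'cV[C]_2).

Definition blk2 N (v w : 'cV[C]_N) := e0 *t v + e1 *t w.

Lemma hdot_blk2 N (v w v' w' : 'cV[C]_N) :
  hdot (blk2 v w) (blk2 v' w') = hdot v v' + hdot w w'.
Proof.
rewrite /blk2 !hdotDl !hdotDr !hdot_tensmx !hdot_delta /=.
by rewrite !mul0r !mul1r addr0 add0r.
Qed.

Lemma mulmx_delta2 (A : 'M[C]_2) (j : 'I_2) :
  A *m delta_mx j 0 = A 0 j *: e0 + A 1 j *: e1.
Proof.
apply/matrixP => i k; rewrite !mxE !big_ord_recl big_ord0 !mxE !ord1 /=.
by case: i j => [[|[|//]] ?] [[|[|//]] ?];
  rewrite /= ?(mulr0, mulr1, addr0, add0r) //; congr (A _ _); apply: val_inj.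
Qed.

Lemma mul_tensmx_blk2 N (A : 'M[C]_2) (B : 'M[C]_N) (v w : 'cV[C]_N) :
  (A *t B) *m blk2 v w =
  blk2 (A 0 0 *: (B *m v) + A 0 1 *: (B *m w)) (A 1 0 *: (B *m v) + A 1 1 *: (B *m w)).
Proof.
rewrite /blk2 mulmxDr !tensmx_mul !mulmx_delta2.
by rewrite !tensmxDl !tensmxDr !tensmxZl !tensmxZr addrACA.
Qed.

Definition stack p (v w : 'cV[C]_(2 ^ p)) : 'cV[C]_(2 ^ p.+1) :=
  castmx (esym (expnS 2 p), erefl 1%N) (blk2 v w).

End SpinorBlocks.

Section CliffordRecursion.
Variable R : realType.
Local Notation C := R[i].
Local Notation castS p := (castmx (esym (expnS 2 p), esym (expnS 2 p))).

Lemma eq_tenspow l (f g : nat -> 'M[C]_2) : f =1 g -> tenspow l f = tenspow l g.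
Proof. by elim: l f g => //= l IH f g fg; rewrite fg (IH _ (fun k => g k.+1)). Qed.

Definition clifford_factor (k l : nat) : 'M[C]_2 :=
  if (l < k.-1./2)%N then Em R
  else if l == k.-1./2 then (if odd k then g1 R else g2 R) else Tm R.

(* [cliff n k] is [clifford n./2 k] by definition. *)
Definition clifford m k : 'M[C]_(2 ^ m) :=
  if (1 <= k <= 2 * m)%N then tenspow m (clifford_factor k)
  else ii R *: tenspow m (fun _ => Tm R).

Definition Tpow p : 'M[C]_(2 ^ p) := tenspow p (fun _ => Tm R).

Lemma clifford1 p : clifford p.+1 1 = castS p (g1 R *t Tpow p).
Proof. by rewrite /clifford /=; congr (castmx _ (_ *t _)); apply: eq_tenspow. Qed.

Lemma clifford2 p : clifford p.+1 2 = castS p (g2 R *t Tpow p).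
Proof.
by rewrite /clifford /= mulnS; congr (castmx _ (_ *t _)); apply: eq_tenspow.
Qed.

Lemma clifford_odd p : clifford p p.*2.+1 = ii R *: Tpow p.
Proof. by rewrite /clifford mul2n ltnn andbF. Qed.

Lemma clifford_oddS p : clifford p.+1 p.*2.+3 = castS p ((ii R *: Tm R) *t Tpow p).
Proof. by rewrite /clifford mul2n doubleS ltnn andbF tensmxZl -scale_castmx. Qed.

Lemma clifford_shift p k : (k < p.*2)%N ->
  clifford p.+1 k.+3 = castS p (Em R *t clifford p k.+1).
Proof.
move=> lt_k_2p; have lt_k : (k < 2 * p)%N by rewrite mul2n.
rewrite /clifford lt_k mul2n doubleS !ltnS lt_k_2p /=.
congr (castmx _ (_ *t _)); apply: eq_tenspow => l.
by rewrite /clifford_factor /= ltnS eqSS negbK.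
Qed.

Definition zeta_coord m (a : 'cV[C]_(2 ^ m)) (k : nat) : C :=
  if k == 0%N then sqnorm a else hdot (ii R *: (clifford m k *m a)) a.

Lemma ii_sqr : ii R * ii R = -1.
Proof. by rewrite /ii -expr2 sqr_i. Qed.

Lemma zeta_coord_odd p (v : 'cV[C]_(2 ^ p)) :
  zeta_coord v p.*2.+1 = - hdot (Tpow p *m v) v.
Proof.
by rewrite /zeta_coord /= clifford_odd -scalemxAl !hdotZl mulrA ii_sqr mulN1r.
Qed.

Lemma zeta_coordZ p (v : 'cV[C]_(2 ^ p)) g k :
  k != 0%N -> zeta_coord (g *: v) k = g * g^* * zeta_coord v k.
Proof.
by move=> k_gt0; rewrite /zeta_coord (negbTE k_gt0) -scalemxAr !hdotZl hdotZr; ring.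
Qed.

Section Stack.
Variables (p : nat) (v w : 'cV[C]_(2 ^ p)).

Lemma zeta_coord_stack_tens (A : 'M[C]_2) (B : 'M[C]_(2 ^ p)) k :
  k != 0%N -> clifford p.+1 k = castS p (A *t B) ->
  zeta_coord (stack v w) k =
    ii R * (A 0 0 * hdot (B *m v) v + A 0 1 * hdot (B *m w) v
          + (A 1 0 * hdot (B *m v) w + A 1 1 * hdot (B *m w) w)).
Proof.
move=> k_gt0 def_c; rewrite /zeta_coord (negbTE k_gt0) def_c /stack castmx_mulmx.
by rewrite hdotZl hdot_castmx mul_tensmx_blk2 hdot_blk2 !hdotDl !hdotZl.
Qed.

Lemma zeta_coord_stack0 : zeta_coord (stack v w) 0 = hdot v v + hdot w w.
Proof. by rewrite /zeta_coord /= sqnormE /stack hdot_castmx hdot_blk2. Qed.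

Lemma zeta_coord_stack1 :
  zeta_coord (stack v w) 1 = hdot (Tpow p *m w) w - hdot (Tpow p *m v) v.
Proof.
rewrite (zeta_coord_stack_tens _ (clifford1 p)) // /g1 !mxE /=.
by rewrite !mul0r addr0 add0r mulrDr !mulrA mulrN ii_sqr !mulN1r opprK addrC mul1r.
Qed.

Lemma zeta_coord_stack2 :
  zeta_coord (stack v w) 2 = - (hdot (Tpow p *m w) v + hdot (Tpow p *m v) w).
Proof.
rewrite (zeta_coord_stack_tens _ (clifford2 p)) // /g2 !mxE /=.
by rewrite !mul0r addr0 add0r mulrDr !mulrA ii_sqr !mulN1r opprD.
Qed.

Lemma zeta_coord_stack_odd :
  zeta_coord (stack v w) p.*2.+3 =
    ii R * (hdot (Tpow p *m w) v - hdot (Tpow p *m v) w).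
Proof.
rewrite (zeta_coord_stack_tens _ (clifford_oddS p)) // /Tm !mxE /=.
by rewrite !mulr0 !mul0r addr0 add0r mulrN ii_sqr opprK mul1r mulN1r.
Qed.

Lemma zeta_coord_stack_shift k : (k < p.*2)%N ->
  zeta_coord (stack v w) k.+3 = zeta_coord v k.+1 + zeta_coord w k.+1.
Proof.
move=> lt_k_2p; rewrite (zeta_coord_stack_tens _ (clifford_shift lt_k_2p)) //.
rewrite /Em !mxE /=.
by rewrite !mul0r addr0 add0r !mul1r mulrDr /zeta_coord /= !hdotZl.
Qed.

End Stack.
End CliffordRecursion.

Section RealParameters.
Variable R : realType.

Lemma inverse_stereographic (x1 x2 x3 : R) : exists gr gi q : R,
  [/\ (q * (1 + gr ^+ 2 + gi ^+ 2)) ^+ 2 = x1 ^+ 2 + x2 ^+ 2 + x3 ^+ 2,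
      (gr ^+ 2 + gi ^+ 2 - 1) * q = x1, - 2 * gr * q = x2 & - 2 * gi * q = x3].
Proof.
wlog x1_ge0 : x1 x2 x3 / 0 <= x1.
  move=> gen; have [/gen//|x1_lt0] := lerP 0 x1.
  have [gr [gi [q [qE x1E x2E x3E]]]] := gen (- x1) (- x2) (- x3) ltac:(lra).
  exists gr, gi, (- q); split; first by rewrite mulNr sqrrN qE !sqrrN.
  - by rewrite mulrN x1E opprK.
  - by rewrite mulrN x2E opprK.
  - by rewrite mulrN x3E opprK.
pose rho := Num.sqrt (x1 ^+ 2 + x2 ^+ 2 + x3 ^+ 2).
have rho_ge0 : 0 <= rho := sqrtr_ge0 _.
have rho_sqr : rho ^+ 2 = x1 ^+ 2 + x2 ^+ 2 + x3 ^+ 2 by rewrite sqr_sqrtr //; nra.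
have [D0|D_neq0] := eqVneq (rho + x1) 0.
  have x1_0 : x1 = 0 by lra.
  have /eqP : x2 ^+ 2 + x3 ^+ 2 = 0 by move: rho_sqr; rewrite x1_0; nra.
  rewrite paddr_eq0 ?sqr_ge0 // !sqrf_eq0 => /andP[/eqP x2_0 /eqP x3_0].
  by exists 0, 0, 0; rewrite x1_0 x2_0 x3_0; split; ring.
have x3_sqr : x3 ^+ 2 = rho ^+ 2 - x1 ^+ 2 - x2 ^+ 2 by rewrite rho_sqr; ring.
exists (x2 / (rho + x1)), (x3 / (rho + x1)), (- (rho + x1) / 2).
split; [rewrite -rho_sqr| | |]; rewrite ?expr_div_n ?x3_sqr; field; exact: D_neq0.
Qed.
Lemma null_vector_R31_params (x0 x1 x2 x3 : R) :
  0 < x0 -> x0 ^+ 2 = x1 ^+ 2 + x2 ^+ 2 + x3 ^+ 2 -> exists s wr wi : R,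
  [/\ s ^+ 2 + wr ^+ 2 + wi ^+ 2 = x0, wr ^+ 2 + wi ^+ 2 - s ^+ 2 = x1,
      - 2 * s * wr = x2 & - 2 * s * wi = x3].
Proof.
move=> x0_gt0 x_null.
have [x1E|x1_neq] := eqVneq x1 x0.
  have /eqP : x2 ^+ 2 + x3 ^+ 2 = 0 by move: x_null; rewrite x1E; lra.
  rewrite paddr_eq0 ?sqr_ge0 // !sqrf_eq0 => /andP[/eqP x2_0 /eqP x3_0].
  exists 0, (Num.sqrt x0), 0; rewrite sqr_sqrtr ?ltW // x1E x2_0 x3_0; split; ring.
have d_gt0 : 0 < (x0 - x1) / 2.
  by apply: divr_gt0 => //; rewrite subr_gt0 lt_neqAle x1_neq; nra.
pose s := Num.sqrt ((x0 - x1) / 2).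
have s_sqr : s ^+ 2 = (x0 - x1) / 2 by rewrite sqr_sqrtr ?ltW.
have s_neq0 : s != 0 by rewrite gt_eqF // sqrtr_gt0.
have x3_sqr : x3 ^+ 2 = x0 ^+ 2 - x1 ^+ 2 - x2 ^+ 2 by rewrite x_null; ring.
exists s, (- x2 / (2 * s)), (- x3 / (2 * s)).
split; rewrite ?expr_div_n ?sqrrN ?x3_sqr ?exprMn ?s_sqr; field.
all: by rewrite ?s_neq0 // subr_eq0 eq_sym.
Qed.

End RealParameters.

Section Realisation.
Variable R : realType.
Local Notation C := R[i].

Local Ltac split_complex :=
  apply/eqP; rewrite eq_complex /=; apply/andP; split; apply/eqP.

(* Odd dimension 2m+1: [x] lists the coordinates x_0, x_1, ..., x_(2m+1). *)
Definition null_seq m (x : nat -> R) :=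
  0 < x 0%N /\ x 0%N ^+ 2 = \sum_(i < m.*2.+1) x i.+1 ^+ 2.

Definition realizes m (a : 'cV[C]_(2 ^ m)) (x : nat -> R) :=
  forall j, (j <= m.*2.+1)%N -> (x j)%:C = zeta_coord a j.

Lemma hdot1 (u v : 'cV[C]_1) : hdot u v = u 0 0 * (v 0 0)^*.
Proof. by rewrite /hdot big_ord1. Qed.

Lemma null_seq1_realized x : null_seq 1 x -> exists a : 'cV[C]_(2 ^ 1), realizes a x.
Proof.
move=> [x0_gt0]; rewrite !big_ord_recl big_ord0 addr0 addrA => x_null.
have [s [wr [wi [x0E x1E x2E x3E]]]] := null_vector_R31_params x0_gt0 x_null.
pose v : 'cV[C]_(2 ^ 0) := const_mx s%:C.
pose w : 'cV[C]_(2 ^ 0) := const_mx (wr +i* wi).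
exists (stack v w) => -[|[|[|[|//]]]] _.
- by rewrite zeta_coord_stack0 !hdot1 !mxE -x0E; split_complex; ring.
- by rewrite zeta_coord_stack1 /Tpow /= !mul1mx !hdot1 !mxE -x1E; split_complex; ring.
- by rewrite zeta_coord_stack2 /Tpow /= !mul1mx !hdot1 !mxE -x2E; split_complex; ring.
- rewrite (zeta_coord_stack_odd (p := 0)) /Tpow /= !mul1mx !hdot1 !mxE -x3E.
  by split_complex; ring.
Qed.

Lemma big_ord_double_succ p (f : nat -> R) :
  \sum_(i < p.+1.*2.+1) f i = f 0%N + f 1%N + f p.*2.+2 + \sum_(i < p.*2) f i.+2.
Proof. by rewrite doubleS 2!big_ord_recl big_ord_recr /=; ring. Qed.

Lemma null_seq_realizedS p x :
  (forall y, null_seq p y -> exists a : 'cV[C]_(2 ^ p), realizes a y) ->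
  null_seq p.+1 x -> exists a : 'cV[C]_(2 ^ p.+1), realizes a x.
Proof.
move=> IH [x0_gt0]; rewrite (big_ord_double_succ p (fun i => x i.+1 ^+ 2)) /= => x_null.
have [gr [gi [q [qc_sqr x1E x2E xlastE]]]] :=
  inverse_stereographic (x 1%N) (x 2%N) (x p.*2.+3).
set c := 1 + gr ^+ 2 + gi ^+ 2 in qc_sqr.
have c_neq0 : c != 0 by rewrite gt_eqF // /c; nra.
(* x with its three outer slots removed and its rest divided by c; the
   last slot -q makes <S v, v> = q. *)
pose y j := if j == 0%N then x 0%N / c else if j == p.*2.+1 then - q else x j.+2 / c.
have [v v_y] : exists v : 'cV[C]_(2 ^ p), realizes v y.
  apply: IH; split; first by rewrite /y divr_gt0 // lt_def c_neq0 /c; nra.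
  rewrite big_ord_recr /= /y /= eqxx.
  under eq_bigr => i _ do rewrite eqSS ltn_eqF // exprMn exprVn.
  by rewrite -mulr_suml exprMn exprVn x_null -qc_sqr; field.
have Tv : hdot (Tpow R p *m v) v = q%:C.
  by apply: oppr_inj; rewrite -zeta_coord_odd -v_y // /y eqxx rmorphN.
have vv : hdot v v = (x 0%N / c)%:C by rewrite -sqnormE (v_y 0%N isT).
pose g : C := gr +i* gi.
exists (stack v (g *: v)) => -[|[|[|k]]] le_k.
- rewrite zeta_coord_stack0 hdotZl hdotZr vv.
  by split_complex; [rewrite /c; field; exact: c_neq0 | ring].
- by rewrite zeta_coord_stack1 -scalemxAr hdotZl hdotZr Tv -x1E; split_complex; ring.
- by rewrite zeta_coord_stack2 -scalemxAr hdotZl hdotZr Tv -x2E; split_complex; ring.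
have [lt_k|ge_k] := ltnP k p.*2.
  rewrite zeta_coord_stack_shift // zeta_coordZ // -v_y; last by rewrite ltnS ltnW.
  rewrite /y /= eqSS ltn_eqF //.
  by split_complex; [rewrite /c; field; exact: c_neq0 | ring].
have -> : k = p.*2.
  by move: le_k; rewrite doubleS !ltnS => le_k; apply/eqP; rewrite eqn_leq le_k.
rewrite zeta_coord_stack_odd -scalemxAr hdotZl hdotZr Tv -xlastE.
by split_complex; ring.
Qed.

Lemma null_seq_realized m x :
  (0 < m)%N -> null_seq m x -> exists a : 'cV[C]_(2 ^ m), realizes a x.
Proof.
elim: m x => // -[_ x _|p IH x _]; first exact: null_seq1_realized.
by apply: null_seq_realizedS => y; apply: IH.
Qed.

End Realisation.

Lemma mink_dot_null (R : realType) n (z : 'cV[R]_n.+1) :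
  mink_dot z z = 0 -> z ord0 0 ^+ 2 = \sum_(i < n) z (lift ord0 i) 0 ^+ 2.
Proof.
rewrite /mink_dot big_mkcond big_ord_recl /= add0r => /eqP.
by rewrite subr_eq0 expr2 => /eqP <-; apply: eq_bigr => i _; rewrite expr2.
Qed.

Lemma big_ord_widen_zero (R : nmodType) n N (f : nat -> R) :
  (n <= N)%N -> (forall i, (n <= i)%N -> f i = 0) ->
  \sum_(i < N) f i = \sum_(i < n) f i.
Proof.
move=> le_nN f0; rewrite (big_ord_widen N f le_nN) [RHS]big_mkcond.
by apply: eq_bigr => i _; case: ltnP => // /f0.
Qed.

Theorem proposition2p4 (R : realType) (n : nat) (hn : (2 <= n)%N)
    (zeta : 'cV[R]_(n.+1)) :
  future_null zeta ->
  exists a : 'cV[R[i]]_(2 ^ n./2),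
    map_mx (fun x : R => x%:C) zeta = zeta_of a.
Proof.
move=> [_ [zeta_null zeta0_gt0]].
have n_le : (n <= n./2.*2.+1)%N.
  by rewrite -{1}(odd_double_half n) addnC -addn1 leq_add2l leq_b1.
(* For even n, the odd-dimensional coordinate x_(n+1) is the padding 0. *)
pose x j := if (j <= n)%N then zeta (inord j) 0 else 0.
have x_val (i : 'I_n.+1) : x i = zeta i 0 by rewrite /x -ltnS ltn_ord inord_val.
have [a a_x] : exists a : 'cV[R[i]]_(2 ^ n./2), realizes a x.
  apply: null_seq_realized; first by rewrite half_gt0.
  split; first by rewrite (x_val ord0).
  rewrite (x_val ord0) mink_dot_null //.
  rewrite (big_ord_widen_zero (f := fun i => x i.+1 ^+ 2) n_le).
    by apply: eq_bigr => i _; rewrite (x_val (lift ord0 i)).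
  by move=> i le_ni; rewrite /x leqNgt ltnS le_ni expr0n.
exists a; apply/matrixP => i j; rewrite ord1 !mxE -x_val a_x //.
by rewrite (leq_trans _ n_le) // -ltnS.
Qed.
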